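(* Let $N,m,d$ be natural numbers with $d\geqslant m+1$, and let $c,C,\varepsilon$ be positive constants. Let $L:\mathbb{R}^d\to\mathbb{R}^m$ be a surjective linear map with $\Vert L\Vert_\infty\leqslant C$ and $\operatorname{dist}(L,V_{\mathrm{rank}}(m,d))\geqslant c$. Let $F:\mathbb{R}^d\to[0,1]$ be supported on $[-N,N]^d$ and $G:\mathbb{R}^m\to[0,1]$ supported on $[-\varepsilon,\varepsilon]^m$. Then $T^L_{F,G,N}(1,\dots,1)\ll_{c,C,\varepsilon}\Vert G\Vert_\infty$.
   Context: Matrices identified with linear maps; $\Vert L\Vert_\infty$ max absolute entry; $\operatorname{dist}$ is $\ell^\infty$ distance on entries; $V_{\mathrm{rank}}(m,d)$ is the set of $m\times d$ real matrices of rank $<m$; $\Vert G\Vert_\infty=\sup|G|$. $T^L_{F,G,N}(1,\dots,1)=N^{-(d-m)}\sum_{\mathbf n\in\mathbb{Z}^d}F(\mathbf n)G(L\mathbf n)$. Implied constants depend on $c,C,\varepsilon,m,d$. *)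

From HB Require Import structures.
From mathcomp Require Import all_boot all_order all_algebra.
From mathcomp Require Import all_classical all_reals all_analysis.
Set Implicit Arguments. Unset Strict Implicit. Unset Printing Implicit Defensive.
Import Order.TTheory GRing.Theory Num.Theory.
Local Open Scope classical_set_scope.
Local Open Scope ring_scope.

(* Vectors of R^k are column vectors 'cV[R]_k; the linear map L : R^d -> R^m is
   the m x d matrix acting by x |-> L *m x. *)

Definition mx_max_abs (R : realType) (p q : nat) (A : 'M[R]_(p, q)) : R :=
  \big[Num.max/0]_(ij : 'I_p * 'I_q) `|A ij.1 ij.2|.

Definition Vrank (R : realType) (m d : nat) : set 'M[R]_(m, d) :=
  [set M | (\rank M < m)%N].

(* l^infty distance from L to a set of matrices (an extended real; +oo for the empty set) *)
Definition mx_dist (R : realType) (m d : nat) (L : 'M[R]_(m, d))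
    (V : set 'M[R]_(m, d)) : \bar R :=
  ereal_inf [set (mx_max_abs (L - M))%:E | M in V].

Definition sup_norm (R : realType) (k : nat) (G : 'cV[R]_k -> R) : R :=
  sup (range (fun y => `|G y|)).

Definition lat (R : realType) (d : nat) (n : 'cV[int]_d) : 'cV[R]_d :=
  map_mx (fun z : int => z%:~R) n.

Definition T_LFGN (R : realType) (m d N : nat) (L : 'M[R]_(m, d))
    (F : 'cV[R]_d -> R) (G : 'cV[R]_m -> R) : \bar R :=
  ((N%:R ^- (d - m))%:E *
   \esum_(n in [set: 'cV[int]_d]) (F (lat R n) * G (L *m lat R n))%:E)%E.
Arguments Vrank R m d : clear implicits.

(* T is N^-(d-m) times a sum over the points n of [-N, N]^d with
   |L_i n| <= eps for every row L_i, and each term is at most ||G||_oo, so it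
   suffices to count these points by O((2N+1)^(d-m)).  The distance hypothesis
   says that every combination a^T L of the rows has an entry of size at least
   c |a_k|.  Hence the first row r has a pivot |r_j| >= c: with the other
   coordinates fixed, n_j takes at most 2 eps / c + 1 values; eliminating x_j from
   the remaining rows gives one row fewer, still robustly independent, with
   slightly worse entry bound and slab width.  After m pivots, m coordinates are
   determined up to bounded choices and the other d - m range over [-N, N]. *)

From HB Require Import structures.
From mathcomp Require Import all_boot all_order all_algebra.
From mathcomp Require Import all_classical all_reals all_analysis.
From mathcomp Require Import ring lra zify.

Set Implicit Arguments.
Unset Strict Implicit.
Unset Printing Implicit Defensive.

Import Order.TTheory GRing.Theory Num.Theory.
Local Open Scope ring_scope.

Lemma normr_div_le (R : numFieldType) (x y c C : R) : 0 < c -> c <= `|y| -> `|x| <= C ->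
  `|x / y| <= C / c.
Proof.
move=> c0 cy xC; rewrite normf_div; apply: (@le_trans _ _ (`|x| / c)).
- by rewrite ler_wpM2l // lef_pV2 ?posrE // (lt_le_trans c0).
- by rewrite ler_wpM2r // invr_ge0 ltW.
Qed.

Section Rows.
Variables (R : realFieldType) (d : nat).
Implicit Types (rs : seq ('I_d -> R)) (J : {set 'I_d}).

Fixpoint lincomb rs (a : nat -> R) (j : 'I_d) : R :=
  if rs is r :: rs' then a 0%N * r j + lincomb rs' (fun n => a n.+1) j else 0.

Definition robust_indep (c : R) rs J := forall a k M, (k < size rs)%N -> 0 <= M ->
  (forall j, j \notin J -> `|lincomb rs a j| <= M) -> c * `|a k| <= M.

Definition eliminate (r : 'I_d -> R) (j : 'I_d) rs :=
  [seq (fun i => q i - q j / r j * r i) | q <- rs].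

Lemma lincomb0 rs a j : (forall n, a n = 0) -> lincomb rs a j = 0.
Proof. by elim: rs a => [|r rs IH] a a0 //=; rewrite a0 mul0r add0r IH. Qed.

Lemma lincomb_nth rs a j :
  lincomb rs a j = \sum_(k < size rs) a k * nth (fun=> 0) rs k j.
Proof. by elim: rs a => [|r rs IH] a /=; rewrite ?big_ord0 // big_ord_recl IH. Qed.

Lemma lincomb_eliminate r j rs a i : r j != 0 ->
  lincomb (eliminate r j rs) a i = lincomb rs a i - lincomb rs a j / r j * r i.
Proof.
move=> rj0; elim: rs a => [|q rs IH] a /=; first by rewrite !mul0r subr0.
by rewrite IH; field.
Qed.

Lemma robust_indep_pivot (c : R) r rs J : 0 < c -> robust_indep c (r :: rs) J ->
  exists2 j, j \notin J & c <= `|r j|.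
Proof.
move=> c0 indep; have [/exists_inP[j]|] := boolP [exists j in ~: J, c <= `|r j|].
  by rewrite inE; exists j.
rewrite negb_exists_in => /forall_inP small.
pose M := \big[Num.max/0]_(j in ~: J) `|r j|.
have M0 : 0 <= M by apply/bigmax_geP; left.
have Mc : M < c by apply: bigmax_lt => // j /small; rewrite -ltNge.
suff : c * `|1 : R| <= M by rewrite normr1 mulr1 leNgt Mc.
apply: (indep (fun n => (n == 0)%:R) 0%N) => // j jJ.
by rewrite /= mul1r lincomb0 // addr0; apply: le_bigmax_cond; rewrite inE.
Qed.

Lemma robust_indep_eliminate (c : R) r j rs J : r j != 0 ->
  robust_indep c (r :: rs) J -> robust_indep c (eliminate r j rs) (j |: J).
Proof.
move=> rj0 indep a k M; rewrite size_map => ks M0 small.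
pose b n := if n is n'.+1 then a n' else - (lincomb rs a j / r j).
have lincomb_b i : lincomb (r :: rs) b i = lincomb (eliminate r j rs) a i.
  by rewrite lincomb_eliminate //=; ring.
apply: (indep b k.+1) => // i iJ; rewrite lincomb_b.
have [->|ij] := eqVneq i j; first by rewrite lincomb_eliminate // mulfVK // subrr normr0.
by apply: small; rewrite !inE negb_or ij.
Qed.

Lemma eliminate_bounded (c C : R) r j rs : 0 < c -> c <= `|r j| ->
  (forall q, q \in r :: rs -> forall i, `|q i| <= C) ->
  forall q, q \in eliminate r j rs -> forall i, `|q i| <= C + C * C / c.
Proof.
move=> c0 crj bounded _ /mapP[q qrs ->] i.
have qC := bounded q (mem_behead (s := r :: rs) qrs).
have rC := bounded r (mem_head _ _).
have ratio := normr_div_le c0 crj (qC j).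
rewrite (le_trans (ler_normB _ _)) // lerD // normrM mulrAC.
by rewrite ler_pM ?(le_trans _ (rC i)).
Qed.

End Rows.

Lemma card_le_diameter (R : realFieldType) n (S : {set 'I_n}) (l : R) : 0 <= l ->
  (forall s t, s \in S -> t \in S -> (s : nat)%:R - (t : nat)%:R <= l) ->
  (#|S|%:R : R) <= l + 1.
Proof.
move=> l0 diamS; have [->|[s0 Ss0]] := set_0Vmem S; first by rewrite cards0; lra.
case: (arg_minnP (fun i : 'I_n => (i : nat)) Ss0) => t0 St0 t0_min.
case: (arg_maxnP (fun i : 'I_n => (i : nat)) Ss0) => t1 St1 t1_max.
have S_sub s : s \in S -> (t0 <= s <= t1)%N by move=> Ss; rewrite t0_min //; exact: t1_max.
have : (#|S| <= (t1 - t0).+1)%N.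
  rewrite -[X in (_ <= X)%N]card_ord.
  apply: (@leq_card_in _ _ (fun s : 'I_n => inord (s - t0) : 'I_(t1 - t0).+1)).
  move=> s s' /S_sub/andP[ts st] /S_sub/andP[ts' st'] /(congr1 val).
  by rewrite /= !inordK ?ltnS ?leq_sub2r // => e; apply: val_inj => /=; lia.
rewrite -(ler_nat R) => /le_trans; apply.
have /andP[t01 _] := S_sub _ St1.
by have := diamS _ _ St1 St0; rewrite -addn1 natrD natrB //; lra.
Qed.

Section LatticeBox.
Variables (R : realFieldType) (d N : nat).

(* A point n of [-N, N]^d is encoded by the coordinates n_i + N in 'I_(2N+1). *)
Local Notation box := {ffun 'I_d -> 'I_(N.*2.+1)}.
Implicit Types (f g : box) (rs : seq ('I_d -> R)) (J : {set 'I_d}).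

Definition box_centre : 'I_(N.*2.+1) := inord N.

Definition box_coord f i : R := (f i)%:R - N%:R.

Definition dotp (r : 'I_d -> R) f : R := \sum_i r i * box_coord f i.

Definition zero_at j f : box := [ffun i => if i == j then box_centre else f i].

Definition slab rs J (eps : R) : {set box} :=
  [set f : box | [forall j in J, f j == box_centre]
                & all (fun r => `|dotp r f| <= eps) rs].

Lemma box_coord_zero_at j f i :
  box_coord (zero_at j f) i = if i == j then 0 else box_coord f i.
Proof.
rewrite /box_coord ffunE; case: (i == j) => //.
by rewrite /box_centre inordK ?subrr // ltnS -addnn leq_addr.
Qed.

Lemma dotp_zero_at r j f : r j = 0 -> dotp r (zero_at j f) = dotp r f.
Proof.
move=> rj0; apply: eq_bigr => i _; rewrite box_coord_zero_at.
by case: eqP => [->|//]; rewrite rj0 !mul0r.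
Qed.

Lemma dotpB_zero_at r j f g : zero_at j f = zero_at j g ->
  dotp r f - dotp r g = r j * (box_coord f j - box_coord g j).
Proof.
move=> fg; rewrite /dotp -sumrB (bigD1 j) //= big1 ?addr0 ?mulrBr // => i ij.
have /= := congr1 (box_coord^~ i) fg.
by rewrite !box_coord_zero_at (negbTE ij) => ->; rewrite subrr.
Qed.

Lemma dotp_linear q r (s : R) f :
  dotp (fun i => q i - s * r i) f = dotp q f - s * dotp r f.
Proof. by rewrite /dotp mulr_sumr -sumrB; apply: eq_bigr => i _; ring. Qed.

Lemma card_le_fibers (A : {set box}) j (l : R) : 0 <= l ->
  (forall f g, f \in A -> g \in A -> zero_at j f = zero_at j g ->
     box_coord f j - box_coord g j <= l) ->
  (#|A|%:R : R) <= (l + 1) * #|zero_at j @: A|%:R.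
Proof.
move=> l0 fibers; rewrite -sumr_const (partition_big_imset (zero_at j)) /=.
rewrite mulr_natr -sumr_const; apply: ler_sum => y _.
set B := [set f in A | zero_at j f == y].
rewrite (eq_bigl (mem B)) => [|f]; last by rewrite !inE.
have fiber_inj : {in B &, injective (fun f => f j)}.
  move=> f g; rewrite !inE => /andP[_ /eqP fy] /andP[_ /eqP gy] fgj.
  apply/ffunP => i; have [->//|ij] := eqVneq i j.
  by have := congr1 (fun h : box => h i) (etrans fy (esym gy)); rewrite !ffunE (negbTE ij).
rewrite sumr_const -(card_in_imset fiber_inj).
apply: card_le_diameter => // _ _ /imsetP[f Bf ->] /imsetP[g Bg ->].
move: Bf Bg; rewrite !inE => /andP[Af /eqP fy] /andP[Ag /eqP gy].
by have := fibers f g Af Ag (etrans fy (esym gy)); rewrite /box_coord; lra.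
Qed.

Lemma card_slab_nil J eps : (#|slab [::] J eps| <= N.*2.+1 ^ #|~: J|)%N.
Proof.
pose restrict f : {ffun {i | i \in ~: J} -> 'I_(N.*2.+1)} := [ffun i => f (val i)].
have -> : (N.*2.+1 ^ #|~: J| = #|{ffun {i | i \in ~: J} -> 'I_(N.*2.+1)}|)%N.
  by rewrite card_ffun card_ord card_sig.
apply: (@leq_card_in _ _ restrict) => f g.
rewrite !inE !andbT => /forall_inP fJ /forall_inP gJ fg.
apply/ffunP => i; have [iJ|iJ] := boolP (i \in J).
  by rewrite (eqP (fJ i iJ)) (eqP (gJ i iJ)).
have iJc : i \in ~: J by rewrite inE.
by move/ffunP: fg => /(_ (exist _ i iJc)); rewrite !ffunE.
Qed.

Lemma card_slab_fibers (c eps : R) r rs J j : 0 < c -> c <= `|r j| -> 0 <= eps ->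
  (#|slab (r :: rs) J eps|%:R : R) <=
    (2 * eps / c + 1) * #|zero_at j @: slab (r :: rs) J eps|%:R.
Proof.
move=> c0 crj eps0; apply: card_le_fibers => [|f g].
  by rewrite divr_ge0 ?mulr_ge0 ?(ltW c0).
rewrite !inE /= => /andP[_ /andP[rf _]] /andP[_ /andP[rg _]] fg.
have := dotpB_zero_at r fg; set x := box_coord f j - box_coord g j => rx.
have rx_small : `|r j| * `|x| <= 2 * eps.
  by rewrite -normrM -rx (le_trans (ler_normB _ _)) // mulr2n mulrDl mul1r lerD.
rewrite (le_trans (ler_norm x)) // ler_pdivlMr // mulrC (le_trans _ rx_small) //.
by rewrite ler_wpM2r.
Qed.

Lemma zero_at_slab_subset (c C eps : R) r rs J j : 0 < c -> c <= `|r j| ->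
  (forall q, q \in rs -> `|q j| <= C) ->
  zero_at j @: slab (r :: rs) J eps \subset
    slab (eliminate r j rs) (j |: J) (eps + C * eps / c).
Proof.
move=> c0 crj qC; have rj0 : r j != 0 by rewrite -normr_gt0 (lt_le_trans c0).
apply/fintype.subsetP => _ /imsetP[f + ->].
rewrite !inE /= => /andP[/forall_inP fJ /andP[rf qf]].
apply/andP; split.
  apply/forall_inP => i; rewrite !inE ffunE.
  by case: (i == j) => //= iJ; apply: fJ.
apply/allP => _ /mapP[q qrs ->]; rewrite dotp_zero_at ?mulfVK ?subrr // dotp_linear.
have ratio := normr_div_le c0 crj (qC q qrs).
rewrite (le_trans (ler_normB _ _)) // lerD ?(allP qf) // normrM mulrAC.
by rewrite ler_pM ?(le_trans _ (qC _ qrs)) // divr_ge0 ?(ltW c0).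
Qed.

End LatticeBox.

(* One pivot step: a fibre of size at most 2 eps / c + 1, then the elimination
   q - (q_j / r_j) r, whose entries are bounded by C + C^2 / c and which cuts out a
   slab of width eps + C eps / c. *)
Fixpoint slab_const (R : realFieldType) (c : R) k (C eps : R) : R :=
  if k is k'.+1 then (2 * eps / c + 1) * slab_const c k' (C + C * C / c) (eps + C * eps / c)
  else 1.

Lemma slab_const_gt0 (R : realFieldType) (c : R) k : 0 < c ->
  forall C eps, 0 <= C -> 0 <= eps -> 0 < slab_const c k C eps.
Proof.
move=> c0; elim: k => [|k IH] C eps C0 eps0 //=.
by rewrite mulr_gt0 ?IH ?ltr_wpDl ?addr_ge0 ?divr_ge0 ?mulr_ge0 ?(ltW c0).
Qed.

(* This is #|slab| <= K (2N+1)^(#|~: J| - size rs), without the subtraction. *)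
Lemma card_slab (R : realFieldType) (d N : nat) (c : R) : 0 < c ->
  forall (rs : seq ('I_d -> R)) (J : {set 'I_d}) (C eps : R), 0 <= C -> 0 <= eps ->
  robust_indep c rs J -> (forall r, r \in rs -> forall i, `|r i| <= C) ->
  #|slab N rs J eps|%:R * (N.*2.+1)%:R ^+ size rs <=
    slab_const c (size rs) C eps * (N.*2.+1)%:R ^+ #|~: J|.
Proof.
move=> c0 rs; move sz : (size rs) => k.
elim: k rs sz => [|k IH] [|r rs] //= sz J C eps C0 eps0 indep bounded.
  by rewrite mulr1 mul1r -natrX ler_nat card_slab_nil.
move: sz => [sz].
have [j jJ crj] := robust_indep_pivot c0 indep.
have rj0 : r j != 0 by rewrite -normr_gt0 (lt_le_trans c0).
have C' : 0 <= C + C * C / c by rewrite addr_ge0 ?divr_ge0 ?mulr_ge0 ?(ltW c0).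
have eps' : 0 <= eps + C * eps / c by rewrite addr_ge0 ?divr_ge0 ?mulr_ge0 ?(ltW c0).
have := IH _ (etrans (size_map _ _) sz) _ _ _ C' eps' (robust_indep_eliminate rj0 indep)
  (eliminate_bounded c0 crj bounded).
set A' := slab _ _ _ _ => IHe.
have l0 : 0 <= 2 * eps / c + 1 by rewrite addr_ge0 ?divr_ge0 ?mulr_ge0 ?(ltW c0).
have cardA : (#|slab N (r :: rs) J eps|%:R : R) <= (2 * eps / c + 1) * #|A'|%:R.
  apply: le_trans (card_slab_fibers _ _ _ c0 crj eps0) _.
  rewrite ler_wpM2l // ler_nat subset_leq_card // zero_at_slab_subset // => q qrs.
  by apply: bounded; rewrite inE qrs orbT.
have cardJ : #|~: J| = #|~: (j |: J)|.+1.
  have -> : ~: (j |: J) = ~: J :\ j by apply/setP => i; rewrite !inE negb_or.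
  by rewrite (cardsD1 j (~: J)) inE jJ.
rewrite /= cardJ !exprS mulrCA [X in _ <= X]mulrCA ler_wpM2l //.
apply: le_trans (ler_wpM2r (exprn_ge0 _ _) cardA) _; first by rewrite ler0n.
by rewrite -[X in X <= _]mulrA -[X in _ <= X]mulrA; apply: ler_wpM2l.
Qed.

Lemma rank_sub_rank1_lt (F : fieldType) m n (A : 'M[F]_(m, n)) (u : 'rV_m) (w : 'cV_m) :
  u *m w = 1%:M -> (\rank (A - w *m (u *m A))%R < m)%N.
Proof.
move=> uw; have uA : u *m (A - w *m (u *m A)) = 0 *m (A - w *m (u *m A)).
  by rewrite mulmxBr !mulmxA uw mul1mx subrr mul0mx.
suff : ~~ row_free (A - w *m (u *m A)) by rewrite /row_free ltn_neqAle rank_leq_row andbT.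
apply/negP => /row_free_inj/(_ _ _ uA) u0; move: uw.
by rewrite u0 mul0mx => /matrixP/(_ 0 0)/eqP; rewrite !mxE eq_sym oner_eq0.
Qed.

Lemma le_mx_max_abs (R : realType) m n (A : 'M[R]_(m, n)) i j : `|A i j| <= mx_max_abs A.
Proof. exact: (le_bigmax _ (fun ij : 'I_m * 'I_n => `|A ij.1 ij.2|) (i, j)). Qed.

Lemma mx_max_abs_le (R : realType) m n (A : 'M[R]_(m, n)) M :
  0 <= M -> (forall i j, `|A i j| <= M) -> mx_max_abs A <= M.
Proof. by move=> M0 AM; apply: bigmax_le => // -[i j] _; apply: AM. Qed.

Lemma mx_dist_Vrank_robust (R : realType) m d (L : 'M[R]_(m, d)) (c M : R) (a : 'rV_m) k :
  (c%:E <= mx_dist L (Vrank R m d))%E -> 0 <= M ->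
  (forall j, `|(a *m L) 0 j| <= M) -> c * `|a 0 k| <= M.
Proof.
move=> cL M0 aL; have [->|ak0] := eqVneq (a 0 k) 0; first by rewrite normr0 mulr0.
pose w : 'cV_m := (a 0 k)^-1 *: delta_mx k 0.
have aw : a *m w = 1%:M.
  by rewrite -scalemxAr -colE [col k a]mx11_scalar mxE scale_scalar_mx mulVf.
set v := a *m L in aL.
(* a annihilates L - w v, which is therefore singular. *)
have : (c%:E <= (mx_max_abs (w *m v))%:E)%E.
  apply: le_trans cL _; apply: ereal_inf_lbound; exists (L - w *m v).
    exact: rank_sub_rank1_lt.
  by rewrite opprB addrC subrK.
rewrite lee_fin -ler_pdivlMr ?normr_gt0 // => /le_trans; apply.
clearbody v; apply: mx_max_abs_le => [|i j]; first by rewrite divr_ge0.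
rewrite mxE big_ord1 /w !mxE eqxx andbT.
have [_|_] := eqVneq i k; last by rewrite mulr0 mul0r normr0 divr_ge0.
by rewrite mulr1 normrM normfV mulrC ler_wpM2r ?invr_ge0.
Qed.

Section MatrixRows.
Variables (R : realType) (m d : nat) (L : 'M[R]_(m, d)).

Definition rows_of : seq ('I_d -> R) := [seq (fun j => L i j) | i <- enum 'I_m].

Lemma size_rows_of : size rows_of = m.
Proof. by rewrite size_map size_enum_ord. Qed.

Lemma lincomb_rows_of a j : lincomb rows_of a j = ((\row_i a i) *m L) 0 j.
Proof.
rewrite lincomb_nth mxE -(big_mkord xpredT (fun k => a k * nth (fun=> 0) rows_of k j)).
rewrite size_rows_of big_mkord; apply: eq_bigr => i _.
by rewrite (nth_map i) ?size_enum_ord // nth_ord_enum mxE.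
Qed.

Lemma rows_of_bounded r : r \in rows_of -> forall j, `|r j| <= mx_max_abs L.
Proof. by move=> /mapP[i _ ->] j; apply: le_mx_max_abs. Qed.

Lemma robust_indep_rows_of c :
  (c%:E <= mx_dist L (Vrank R m d))%E -> robust_indep c rows_of finset.set0.
Proof.
move=> cL a k M; rewrite size_rows_of => km M0 small.
have := mx_dist_Vrank_robust (a := \row_i a i) (Ordinal km) cL M0; rewrite mxE; apply=> j.
by rewrite -lincomb_rows_of small ?inE.
Qed.

End MatrixRows.

Section LatticePoints.
Variables (R : realType) (d N : nat).

Definition lattice_point (f : {ffun 'I_d -> 'I_(N.*2.+1)}) : 'cV[int]_d :=
  \col_i ((f i)%:Z - N%:Z).

Lemma lat_lattice_point f i : lat R (lattice_point f) i 0 = box_coord R f i.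
Proof. by rewrite !mxE rmorphB. Qed.

Lemma lattice_point_inj : injective lattice_point.
Proof.
move=> f g /matrixP fg; apply/ffunP => i; apply: val_inj.
by have /eqP := fg i 0; rewrite !mxE (can_eq (subrK _)) => /eqP [].
Qed.

Lemma lattice_point_onto (n : 'cV[int]_d) : (forall i, `|lat R n i 0| <= N%:R) ->
  exists f, lattice_point f = n.
Proof.
move=> n_small; exists [ffun i => inord (absz (n i 0 + N%:Z))].
apply/matrixP => i j; rewrite (ord1 j) !mxE ffunE.
have /andP[lo hi] : - N%:Z <= n i 0 <= N%:Z.
  by rewrite -ler_norml -(ler_int R) intr_norm; move: (n_small i); rewrite mxE.
by rewrite inordK ?gez0_abs ?addrK //; lia.
Qed.

End LatticePoints.

Lemma le_sup_norm (R : realType) k (G : 'cV[R]_k -> R) (B : R) :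
  (forall y, `|G y| <= B) -> forall y, `|G y| <= sup_norm G.
Proof.
move=> GB y; apply: sup_upper_bound; last by exists y.
by split; [exists `|G y|, y | exists B => _ [z _ <-]].
Qed.

Lemma sup_norm_ge0 (R : realType) k (G : 'cV[R]_k -> R) (B : R) :
  (forall y, `|G y| <= B) -> 0 <= sup_norm G.
Proof. by move=> GB; apply: le_trans (le_sup_norm GB 0). Qed.

Lemma mul_lat_lattice_point (R : realType) m d N (L : 'M[R]_(m, d)) f i :
  (L *m lat R (@lattice_point d N f)) i 0 = dotp (fun j => L i j) f.
Proof. by rewrite mxE; apply: eq_bigr => j _; rewrite lat_lattice_point. Qed.

Lemma esum_le_card_slab (R : realType) m d N (L : 'M[R]_(m, d)) (F : 'cV[R]_d -> R)
    (G : 'cV[R]_m -> R) (eps : R) :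
  (forall x, 0 <= F x <= 1) -> (forall x, F x != 0 -> forall i, `|x i ord0| <= N%:R) ->
  (forall y, 0 <= G y <= 1) -> (forall y, G y != 0 -> forall i, `|y i ord0| <= eps) ->
  (\esum_(n in [set: 'cV[int]_d]) (F (lat R n) * G (L *m lat R n))%:E <=
   (sup_norm G * #|slab N (rows_of L) finset.set0 eps|%:R)%:E)%E.
Proof.
move=> F01 F_supp G01 G_supp; set A := slab _ _ _ _.
have supp n : F (lat R n) * G (L *m lat R n) != 0 -> exists2 f, f \in A & @lattice_point d N f = n.
  rewrite mulf_eq0 negb_or => /andP[Fn Gn]; have [f fn] := lattice_point_onto (F_supp _ Fn).
  exists f => //; rewrite inE; apply/andP; split; first by apply/forall_inP => i; rewrite inE.
  by apply/allP => _ /mapP[i _ ->]; rewrite -mul_lat_lattice_point fn G_supp.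
have -> : \esum_(n in [set: 'cV[int]_d]) (F (lat R n) * G (L *m lat R n))%:E =
    \esum_(n in @lattice_point d N @` [set f | f \in A]) (F (lat R n) * G (L *m lat R n))%:E.
  rewrite [RHS]esum_mkcond; apply: eq_esum => n _; case: ifPn => // nA.
  apply/eqP; rewrite eqe; apply: contraNT nA => /supp[f fA <-].
  by rewrite inE; exists f.
rewrite esum_image; last by move=> f g _ _; apply: lattice_point_inj.
have G_le1 y : `|G y| <= 1 by have /andP[G0 G1] := G01 y; rewrite ger0_norm.
apply: le_trans (le_esum (b := fun=> (sup_norm G)%:E) _) _ => [f _|].
  have /andP[F0 F1] := F01 (lat R (@lattice_point d N f)).
  have /andP[G0 _] := G01 (L *m lat R (@lattice_point d N f)).
  rewrite lee_fin; apply: le_trans (le_sup_norm G_le1 (L *m lat R (lattice_point f))).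
  by rewrite ger0_norm // ler_piMl.
have sup_ge0 := sup_norm_ge0 G_le1.
rewrite esum_fset; [|exact: finite_finset|by move=> f _; rewrite lee_fin].
have -> : [set` A]%classic = [set` enum A]%classic by apply/seteqP; split => f /=; rewrite mem_enum.
by rewrite -fsbig_seq ?enum_uniq // big_enum /= sumEFin lee_fin sumr_const mulr_natr.
Qed.

Local Open Scope classical_set_scope.

Theorem lemma3p2 (R : realType) (m d : nat) (c C eps : R) :
  (d >= m.+1)%N -> 0 < c -> 0 < C -> 0 < eps ->
  exists K : R, 0 < K /\
  forall (N : nat) (L : 'M[R]_(m, d)) (F : 'cV[R]_d -> R) (G : 'cV[R]_m -> R),
    (0 < N)%N ->
    (forall y : 'cV[R]_m, exists x : 'cV[R]_d, L *m x = y) ->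
    mx_max_abs L <= C ->
    (c%:E <= mx_dist L (Vrank R m d))%E ->
    (forall x, 0 <= F x <= 1) ->
    (forall x, F x != 0 -> forall i, `|x i ord0| <= N%:R) ->
    (forall y, 0 <= G y <= 1) ->
    (forall y, G y != 0 -> forall i, `|y i ord0| <= eps) ->
    (T_LFGN N L F G <= (K * sup_norm G)%:E)%E.
Proof.
move=> dm c0 C0 eps0; set K0 := slab_const c m C eps.
have K0_gt0 : 0 < K0 by rewrite slab_const_gt0 ?ltW.
exists (K0 * 3%:R ^+ (d - m)); split; first by rewrite mulr_gt0 ?exprn_gt0.
move=> N L F G N0 _ LC cL F01 F_supp G01 G_supp.
have := card_slab N c0 (ltW C0) (ltW eps0) (robust_indep_rows_of cL)
  (fun r rL j => le_trans (rows_of_bounded rL j) LC).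
rewrite size_rows_of finset.setC0 cardsT card_ord; set A := slab _ _ _ _ => count.
set P : R := (N.*2.+1)%:R in count.
have cardA : (#|A|%:R : R) <= K0 * P ^+ (d - m).
  by rewrite -(ler_pM2r (exprn_gt0 m (ltr0Sn _ N.*2))) -mulrA -exprD subnK ?(ltnW dm).
have P_le : P <= 3%:R * N%:R by rewrite /P -natrM ler_nat -addn1 -muln2; lia.
have G_le1 y : `|G y| <= 1 by have /andP[G0 G1] := G01 y; rewrite ger0_norm.
have := esum_le_card_slab L F01 F_supp G01 G_supp; rewrite -/A => esum_le.
rewrite /T_LFGN; apply: le_trans (lee_wpmul2l _ esum_le) _.
  by rewrite lee_fin invr_ge0 exprn_ge0.
rewrite -EFinM lee_fin mulrCA [X in _ <= X]mulrC ler_wpM2l ?(sup_norm_ge0 G_le1) //.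
rewrite mulrC ler_pdivrMr ?exprn_gt0 ?ltr0n // -mulrA -exprMn (le_trans cardA) //.
by rewrite ler_wpM2l ?(ltW K0_gt0) //; apply: lerXn2r; rewrite ?nnegrE ?ler0n ?mulr_ge0.
Qed.
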